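(* Let $G$ be a group, $A\subseteq G$ a finite set, $N>0$ a real number and $\epsilon\in(0,1)$. Suppose $X\subseteq\operatorname{Stab}^r_N(A)$ is finite and nonempty. Then $|Z^\ell_\epsilon(A,X)|\leq 2N/\epsilon$. In particular, if $X\subseteq\operatorname{St}^r_{\epsilon^2/2}(A)$ is finite and nonempty, then $|Z^\ell_\epsilon(A,X)|\leq\epsilon|A|$.
   Context: $\operatorname{Stab}^r_N(A)=\{x\in G:|Ax\triangle A|\leq N\}$ ($\triangle$ symmetric difference) and $\operatorname{St}^r_\eta(A)=\operatorname{Stab}^r_{\eta|A|}(A)$. For finite $A,X\subseteq G$, $Z^\ell_\epsilon(A,X)=\{g\in G:\min\{|gX\cap A|,|gX\setminus A|\}\geq\epsilon|X|\}$. *)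

From HB Require Import structures.
From mathcomp Require Import all_boot all_order all_algebra.
From mathcomp Require Import finmap.
Set Implicit Arguments. Unset Strict Implicit. Unset Printing Implicit Defensive.
Import Order.TTheory GRing.Theory Num.Theory.

(* A possibly infinite group G is a [groupType] (mathcomp/boot/monoid.v);
   finite subsets of G are [{fset G}]. *)

Local Open Scope fset_scope.

Definition rtrans (G : groupType) (A : {fset G}) (x : G) : {fset G} :=
  [fset (a * x)%g | a in A].

Definition ltrans (G : groupType) (g : G) (X : {fset G}) : {fset G} :=
  [fset (g * x)%g | x in X].

Definition fsymdiff (T : choiceType) (A B : {fset T}) : {fset T} :=
  (A `\` B) `|` (B `\` A).

Definition Stab_r (R : realFieldType) (G : groupType) (N : R) (A : {fset G})
  : G -> Prop :=
  fun x => ((#|` fsymdiff (rtrans A x) A|)%:R <= N)%R.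

Definition St_r (R : realFieldType) (G : groupType) (eta : R) (A : {fset G})
  : G -> Prop :=
  Stab_r (eta * (#|` A|)%:R)%R A.

Definition Z_l (R : realFieldType) (G : groupType) (eps : R) (A X : {fset G})
  : G -> Prop :=
  fun g => (eps * (#|` X|)%:R <=
            (minn #|` ltrans g X `&` A| #|` ltrans g X `\` A|)%:R)%R.

From HB Require Import structures.
From mathcomp Require Import all_boot all_order all_algebra.
From mathcomp Require Import finmap.
From mathcomp Require Import zify ring lra.
Set Implicit Arguments. Unset Strict Implicit. Unset Printing Implicit Defensive.
Import Order.TTheory GRing.Theory Num.Theory.
Local Open Scope fset_scope.

(* Double counting.  For g in Z put p = |gX ∩ A| and q = |gX \ A|; then p + q = |X|,
   min(p, q) |X| <= 2pq, and pq counts the pairs (x, y) in X^2 with gx ∈ A and gy ∉ A.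
   For fixed x, y such g lie in Ax^-1 \ Ay^-1, a set of size
   |Ax^-1 Δ Ay^-1| / 2 <= (|Ax Δ A| + |Ay Δ A|) / 2 <= N, because right translation
   preserves sizes of symmetric differences.  Summing over Z and over X^2 gives
   |Z| eps |X|^2 <= 2 N |X|^2.  Z is finite because it lies in A X^-1. *)

Section FsetCounting.
Variable T : choiceType.
Implicit Types A B C : {fset T}.

Lemma fsymdiffC A B : fsymdiff A B = fsymdiff B A.
Proof. exact: fsetUC. Qed.

Lemma card_fsymdiff A B : #|` fsymdiff A B| = (#|` A `\` B| + #|` B `\` A|)%N.
Proof.
apply/eqP; rewrite (leq_card_fsetU _ _).2.
apply/fdisjointP => x; rewrite !inE.
by case: (x \in A); case: (x \in B).
Qed.

Lemma card_fsymdiff_eq A B :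
  #|` A| = #|` B| -> #|` fsymdiff A B| = (2 * #|` A `\` B|)%N.
Proof. by move=> eqAB; rewrite card_fsymdiff !cardfsD fsetIC eqAB addnn mul2n. Qed.

Lemma leq_card_fsymdiff A B C :
  (#|` fsymdiff A C| <= #|` fsymdiff A B| + #|` fsymdiff B C|)%N.
Proof.
apply: leq_trans (leq_card_fsetU _ _); apply: fsubset_leq_card.
apply/fsubsetP => x; rewrite !inE.
by case: (x \in A); case: (x \in B); case: (x \in C).
Qed.

Lemma card_fset_sep (S : {fset T}) (P : pred T) :
  #|` [fset x in S | P x]| = (\sum_(x <- S) P x)%N.
Proof. by rewrite card_fset_sum1 big_fset /= big_mkcond. Qed.

Lemma cardfsI_sum A B : #|` A `&` B| = (\sum_(x <- A) (x \in B))%N.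
Proof.
by rewrite -card_fset_sep; congr #|` _|; apply/fsetP => x; rewrite !inE.
Qed.

Lemma cardfsD_sum A B : #|` A `\` B| = (\sum_(x <- A) (x \notin B))%N.
Proof.
by rewrite -card_fset_sep; congr #|` _|; apply/fsetP => x; rewrite !inE andbC.
Qed.

End FsetCounting.

Section Translates.
Variable G : groupType.
Implicit Types A B C X : {fset G}.
Implicit Types g x y : G.

Lemma in_rtrans A x a : (a \in rtrans A x) = (a * x^-1 \in A)%g.
Proof.
apply/imfsetP/idP => [[b bA ->]|aA]; first by rewrite mulgK.
by exists (a * x^-1)%g => //; rewrite mulgVK.
Qed.

Lemma card_rtrans A x : #|` rtrans A x| = #|` A|.
Proof. by rewrite card_in_imfset // => a b _ _; apply: mulIg. Qed.

Lemma card_ltrans g X : #|` ltrans g X| = #|` X|.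
Proof. by rewrite card_in_imfset // => a b _ _; apply: mulgI. Qed.

Lemma rtransM A x y : rtrans (rtrans A x) y = rtrans A (x * y).
Proof. by apply/fsetP => a; rewrite !in_rtrans invgM mulgA. Qed.

Lemma rtrans1 A : rtrans A 1 = A.
Proof. by apply/fsetP => a; rewrite in_rtrans invg1 mulg1. Qed.

Lemma rtrans_fsymdiff B C x :
  rtrans (fsymdiff B C) x = fsymdiff (rtrans B x) (rtrans C x).
Proof. by apply/fsetP => a; rewrite !(inE, in_rtrans). Qed.

Definition rdefect A x := #|` fsymdiff (rtrans A x) A|.

Lemma rdefectV A x : rdefect A x^-1 = rdefect A x.
Proof.
rewrite /rdefect -(card_rtrans _ x) rtrans_fsymdiff rtransM mulVg rtrans1.
by rewrite fsymdiffC.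
Qed.

Lemma card_rtransD_rtrans A x y :
  (2 * #|` rtrans A x^-1 `\` rtrans A y^-1| <= rdefect A x + rdefect A y)%N.
Proof.
rewrite -card_fsymdiff_eq ?card_rtrans //.
apply: leq_trans (leq_card_fsymdiff _ A _) _.
by rewrite [fsymdiff A _]fsymdiffC -!/(rdefect _ _) !rdefectV.
Qed.

End Translates.

Section PairCounting.
Variables (G : groupType) (A X : {fset G}).

Lemma count_pairs_leq (S : {fset G}) (x y : G) :
  (2 * \sum_(g <- S) ((g * x \in A) && (g * y \notin A))%g
     <= rdefect A x + rdefect A y)%N.
Proof.
rewrite -card_fset_sep; apply: leq_trans (card_rtransD_rtrans A x y).
rewrite leq_mul2l fsubset_leq_card ?orbT //; apply/fsubsetP => g.
by rewrite !inE !in_rtrans !invgK => /and3P[_ -> ->].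
Qed.

Lemma cardfs_ltransI g : #|` ltrans g X `&` A| = (\sum_(x <- X) (g * x \in A)%g)%N.
Proof. by rewrite cardfsI_sum big_imfset //= => x y _ _; apply: mulgI. Qed.

Lemma cardfs_ltransD g : #|` ltrans g X `\` A| = (\sum_(x <- X) (g * x \notin A)%g)%N.
Proof. by rewrite cardfsD_sum big_imfset //= => x y _ _; apply: mulgI. Qed.

Lemma cardfs_ltransID g :
  (#|` ltrans g X `&` A| + #|` ltrans g X `\` A|)%N = #|` X|.
Proof. by rewrite cardfsID card_ltrans. Qed.

Lemma mul_cardfs_ltransID g :
  (#|` ltrans g X `&` A| * #|` ltrans g X `\` A|
     = \sum_(x <- X) \sum_(y <- X) ((g * x \in A) && (g * y \notin A))%g)%N.
Proof.
rewrite cardfs_ltransI cardfs_ltransD big_distrl; apply: eq_bigr => x _.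
by rewrite big_distrr; apply: eq_bigr => y _; rewrite /= mulnb.
Qed.

Lemma minn_mulD_leq m n : (minn m n * (m + n) <= 2 * (m * n))%N.
Proof. by rewrite /minn; case: ltnP => h; nia. Qed.

Lemma sum_minn_cardfs_ltrans_leq (S : {fset G}) :
  (\sum_(g <- S) minn #|` ltrans g X `&` A| #|` ltrans g X `\` A| * #|` X|
     <= \sum_(x <- X) \sum_(y <- X) (rdefect A x + rdefect A y))%N.
Proof.
apply: (@leq_trans
  (\sum_(g <- S) 2 * (#|` ltrans g X `&` A| * #|` ltrans g X `\` A|))%N).
  by apply: leq_sum => g _; rewrite -(cardfs_ltransID g) minn_mulD_leq.
rewrite -big_distrr /=; under eq_bigr do rewrite mul_cardfs_ltransID.
rewrite exchange_big /=; under eq_bigr do rewrite exchange_big /=.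
rewrite big_distrr; apply: leq_sum => x _.
by rewrite big_distrr; apply: leq_sum => y _; apply: count_pairs_leq.
Qed.

End PairCounting.

Local Open Scope ring_scope.

Lemma sumr_const_fset (R : pzSemiRingType) (T : choiceType) (X : {fset T}) (c : R) :
  \sum_(x <- X) c = #|` X|%:R * c.
Proof.
by rewrite card_fset_sum1 natr_sum mulr_suml; under [RHS]eq_bigr do rewrite mul1r.
Qed.

Section ZSet.
Variables (R : realFieldType) (G : groupType) (A X : {fset G}) (eps : R).
Hypotheses (eps_gt0 : 0 < eps) (X_neq0 : X != fset0).

Lemma Z_l_sub_mulV g : Z_l eps A X g -> g \in [fset (a * x^-1)%g | a in A, x in X].
Proof.
move=> Zg; have : (0 < #|` ltrans g X `&` A|)%N.
  suff : (0 < minn #|` ltrans g X `&` A| #|` ltrans g X `\` A|)%N.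
    by rewrite leq_min => /andP[].
  by rewrite -(ltr0n R); apply: lt_le_trans Zg; rewrite mulr_gt0 // ltr0n cardfs_gt0.
rewrite cardfs_gt0 => /fset0Pn[_ /fsetIP[/imfsetP[x xX ->] gxA]].
by apply/imfset2P; exists (g * x)%g => //; exists x => //; rewrite mulgK.
Qed.

Lemma Z_l_fset : exists S : {fset G}, forall g, g \in S <-> Z_l eps A X g.
Proof.
exists [fset g in [fset (a * x^-1)%g | a in A, x in X] |
          eps * #|` X|%:R <= (minn #|` ltrans g X `&` A| #|` ltrans g X `\` A|)%:R].
move=> g; rewrite inE /=; split=> [/andP[] //| Zg].
by apply/andP; split; first exact: Z_l_sub_mulV.
Qed.

Lemma card_Z_l_le (N : R) (S : {fset G}) :
  (forall x, x \in X -> Stab_r N A x) -> (forall g, g \in S -> Z_l eps A X g) ->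
  #|` S|%:R <= 2 * N / eps.
Proof.
move=> stabX ZS; set n := #|` X|.
have n_gt0 : 0 < n%:R :> R by rewrite ltr0n cardfs_gt0.
have lower : #|` S|%:R * (eps * n%:R * n%:R) <=
    (\sum_(g <- S) minn #|` ltrans g X `&` A| #|` ltrans g X `\` A| * n)%:R.
  rewrite natr_sum -sumr_const_fset big_seq [leRHS]big_seq; apply: ler_sum => g gS.
  by rewrite natrM ler_wpM2r ?ler0n ?ZS.
have upper : (\sum_(x <- X) \sum_(y <- X) (rdefect A x + rdefect A y))%:R <=
    n%:R * (n%:R * (2 * N)).
  rewrite natr_sum -sumr_const_fset big_seq [leRHS]big_seq; apply: ler_sum => x xX.
  rewrite natr_sum -sumr_const_fset big_seq [leRHS]big_seq; apply: ler_sum => y yX.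
  by have := stabX x xX; have := stabX y yX; rewrite /Stab_r natrD; lra.
have middle : (\sum_(g <- S) minn #|` ltrans g X `&` A| #|` ltrans g X `\` A| * n)%:R
    <= (\sum_(x <- X) \sum_(y <- X) (rdefect A x + rdefect A y))%:R :> R.
  by rewrite ler_nat sum_minn_cardfs_ltrans_leq.
have bound := le_trans lower (le_trans middle upper).
rewrite ler_pdivlMr // -(ler_pM2r (mulr_gt0 n_gt0 n_gt0)); lra.
Qed.

End ZSet.

Theorem lemma3p3 (R : realFieldType) (G : groupType) (A : {fset G}) (N eps : R) :
  0 < N -> 0 < eps < 1 ->
  (forall X : {fset G}, X != fset0 -> (forall x, x \in X -> Stab_r N A x) ->
     exists S : {fset G}, (forall g, g \in S <-> Z_l eps A X g) /\
                          (#|` S|)%:R <= 2 * N / eps)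
  /\
  (forall X : {fset G}, X != fset0 ->
     (forall x, x \in X -> St_r (eps ^+ 2 / 2) A x) ->
     exists S : {fset G}, (forall g, g \in S <-> Z_l eps A X g) /\
                          (#|` S|)%:R <= eps * (#|` A|)%:R).
Proof.
move=> _ /andP[eps_gt0 _]; split=> X X_neq0 stabX;
  have [S defS] := Z_l_fset A eps_gt0 X_neq0; exists S; split=> //.
  by apply: card_Z_l_le stabX _ => // g /defS.
have -> : eps * #|` A|%:R = 2 * (eps ^+ 2 / 2 * #|` A|%:R) / eps.
  by field; rewrite gt_eqF.
by apply: card_Z_l_le stabX _ => // g /defS.
Qed.
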